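(* Let $S$ be a triangulated surface with set of simplices $\mathcal V=\mathcal V_0\cup\mathcal V_1\cup\mathcal V_2$. Then any map $T_2:\mathcal V_2\to \operatorname{Multisets}(\mathcal N)$ such that $|T_2(\sigma)|=3$ for every face $\sigma\in\mathcal V_2$ extends to a simplicial surface tonnetz, i.e. there exists a simplicial surface tonnetz $T:\mathcal V\to\operatorname{Multisets}(\mathcal N)$ on $S$ with $T|_{\mathcal V_2}=T_2$.
   Context: Let $\mathcal N=\mathbb Z/12\mathbb Z$ (pitch classes). A multiset in $\mathcal N$ is a finite collection of elements of $\mathcal N$ with (finite) multiplicities; $\operatorname{Multisets}(\mathcal N)$ denotes the set of all of them. For a multiset $\mathcal C$, $|\mathcal C|$ is its order (number of elements counted with multiplicity) and $[\mathcal C]$ its underlying set. For a set $\mathcal A$ and multiset $\mathcal C$, a bijection $\phi:\mathcal A\to\mathcal C$ means a map $\phi:\mathcal A\to[\mathcal C]$ such that for each $c\in[\mathcal C]$ the cardinality of $\phi^{-1}(c)$ equals the multiplicity of $c$ in $\mathcal C$. Let $S$ be a surface (2-dimensional topological manifold, without boundary) with a triangulation whose sets of vertices, edges and faces are $\mathcal V_0,\mathcal V_1,\mathcal V_2$; $\mathcal V=\mathcal V_0\cup\mathcal V_1\cup\mathcal V_2$ is partially ordered by inclusion, and $\tau\prec\sigma$ means $\tau\le\sigma$ with $\tau$ of codimension 1 in $\sigma$. Every edge has two vertices and lies in exactly two faces. A simplicial surface tonnetz on $S$ is a map $T:\mathcal V\to\operatorname{Multisets}(\mathcal N)$ such that: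 (1) (downwards coherent) for each $\sigma\in\mathcal V_1\cup\mathcal V_2$ there exists a bijection $\partial_\sigma:\{\tau\mid\tau\prec\sigma\}\to T(\sigma)$ such that $\partial_\sigma(\tau)=N$ implies $N\in T(\tau)$; (2) (upwards coherent) for each $\rho\in\mathcal V_0\cup\mathcal V_1$ there exists a bijection $\Delta_\rho:\{\tau\mid\tau\succ\rho\}\to T(\rho)$ such that $\Delta_\rho(\tau)=N$ implies $N\in T(\tau)$. (The bijections are not part of the data; only their existence is required.) *)

From mathcomp Require Import all_boot all_order all_algebra.
From mathcomp Require Import finmap.
Set Implicit Arguments. Unset Strict Implicit. Unset Printing Implicit Defensive.
Local Open Scope fset_scope.

Definition Note := 'Z_12.

Definition mset := {ffun Note -> nat}.
Definition morder (C : mset) : nat := \sum_(N : Note) C N.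
Definition in_mset (N : Note) (C : mset) : Prop := 0 < C N.

(* Combinatorial triangulated surface (without boundary): an abstract
   simplicial complex K on a vertex type V (simplices = nonempty finite sets
   of vertices), of dimension 2, pure, every edge in exactly two faces, and
   the link of every vertex is a (finite) cycle of length >= 3.  The
   vertex type may be infinite (noncompact surfaces), the triangulation
   being locally finite. *)
Definition is_vertex (V : choiceType) (K : {fset V} -> Prop) s := K s /\ #|` s| = 1.
Definition is_edge (V : choiceType) (K : {fset V} -> Prop) s := K s /\ #|` s| = 2.
Definition is_face (V : choiceType) (K : {fset V} -> Prop) s := K s /\ #|` s| = 3.

Definition cyc_adj (V : eqType) (w : seq V) (a b : V) : Prop :=
  a \in w /\ (next w a = b \/ next w b = a).

Record triangulated_surface (V : choiceType) (K : {fset V} -> Prop) : Prop := {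
  ts_dim : forall s, K s -> 0 < #|` s| <= 3;
  ts_closed : forall s t, K s -> t `<=` s -> t != fset0 -> K t;
  ts_pure : forall s, K s -> exists f, is_face K f /\ s `<=` f;
  ts_edge_two_faces : forall e, is_edge K e ->
    exists f1 f2, [/\ f1 != f2, is_face K f1 /\ e `<=` f1, is_face K f2 /\ e `<=` f2
      & forall f, is_face K f -> e `<=` f -> f = f1 \/ f = f2];
  ts_link_cycle : forall v, is_vertex K [fset v] ->
    exists w : seq V, [/\ uniq w, 3 <= size w &
      forall a b, is_face K [fset v; a; b] <-> cyc_adj w a b]
}.

Definition prec (V : choiceType) (K : {fset V} -> Prop) (t s : {fset V}) : Prop :=
  K t /\ K s /\ t `<=` s /\ #|` t|.+1 = #|` s|.

(* phi is a bijection from the set A of simplices onto the multiset C: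
   A is finite (enumerated without repetition by l) and each note N has
   exactly C N preimages in A. *)
Definition is_bij (V : choiceType) (A : {fset V} -> Prop)
    (phi : {fset V} -> Note) (C : mset) : Prop :=
  exists l : seq {fset V}, [/\ uniq l, (forall t, t \in l <-> A t)
    & forall N : Note, count (fun t => phi t == N) l = C N].

Definition is_tonnetz (V : choiceType) (K : {fset V} -> Prop)
    (T : {fset V} -> mset) : Prop :=
  (forall s, K s -> 2 <= #|` s| ->
     exists d, is_bij (fun t => prec K t s) d (T s) /\
       forall t, prec K t s -> in_mset (d t) (T t)) /\
  (forall r, K r -> #|` r| <= 2 ->
     exists D, is_bij (fun t => prec K r t) D (T r) /\
       forall t, prec K r t -> in_mset (D t) (T t)).

From mathcomp Require Import all_boot all_order all_algebra.
From mathcomp Require Import finmap zify.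
From Stdlib Require Import ClassicalEpsilon.
Set Implicit Arguments. Unset Strict Implicit. Unset Printing Implicit Defensive.
Local Open Scope fset_scope.

(* Each face distributes its three notes arbitrarily over its three edges; an
   edge collects the two notes handed to it by its two faces and distributes
   them over its two endpoints; a vertex collects the notes handed to it by
   the edges of its star.  A distribution is a downward bijection and a
   collection is an upward bijection by construction, and the counts match
   because a k-simplex (k >= 1) has k + 1 facets while an edge lies in exactly
   two faces.  The vertex links only enter through the finiteness of stars. *)

Definition mseq (C : mset) : seq Note :=
  flatten [seq nseq (C N) N | N <- index_enum Note].

Lemma count_mseq C N : count_mem N (mseq C) = C N.
Proof.
rewrite /mseq count_flatten sumnE !big_map.
rewrite (bigD1_seq N) ?mem_index_enum ?index_enum_uniq //= count_nseq /= eqxx mul1n.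
by rewrite big1 ?addn0 // => M /negbTE MN; rewrite count_nseq /= MN.
Qed.

Lemma size_mseq C : size (mseq C) = morder C.
Proof.
rewrite /mseq size_flatten /shape sumnE -map_comp big_map /morder.
by apply: eq_bigr => M _; rewrite /= size_nseq.
Qed.

Lemma morder_count (T : Type) (l : seq T) (d : T -> Note) :
  morder [ffun N => count (fun t => d t == N) l] = size l.
Proof.
rewrite /morder; under eq_bigr do rewrite ffunE.
elim: l => [|t l IHl] /=; first by rewrite big1.
rewrite big_split /= IHl (bigD1 (d t)) //= eqxx big1 // => M /negbTE.
by rewrite eq_sym => ->.
Qed.

Lemma map_nth_index (T : eqType) (U : Type) (u0 : U) (l : seq T) (m : seq U) :
  uniq l -> size l = size m -> [seq nth u0 m (index t l) | t <- l] = m.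
Proof.
elim: l m => [|t l IHl] [|u m] //= /andP[tNl ul] [sz].
rewrite eqxx /=; congr (_ :: _); rewrite -{2}(IHl m ul sz).
by apply/eq_in_map => t' t'l /=; case: eqP => // tt'; rewrite tt' t'l in tNl.
Qed.

Section Bijections.
Variables (V : choiceType) (A : {fset V} -> Prop).

Definition enumerates (l : seq {fset V}) := uniq l /\ forall t, t \in l <-> A t.

Lemma enumerates_undup l : (forall t, t \in l <-> A t) -> enumerates (undup l).
Proof. by move=> lA; split=> [|t]; rewrite ?undup_uniq ?mem_undup. Qed.

Lemma size_enumerates l l' : enumerates l -> enumerates l' -> size l = size l'.
Proof.
move=> [ul lA] [ul' l'A]; apply/perm_size/uniq_perm => // t.
by apply/idP/idP => [/lA/l'A | /l'A/lA].
Qed.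

Lemma is_bij_mem d C t : is_bij A d C -> A t -> in_mset (d t) C.
Proof.
move=> [l [_ lA cnt] At]; rewrite /in_mset -cnt -has_count.
by apply/hasP; exists t => //; apply/lA.
Qed.

Lemma is_bij_exists C l : enumerates l -> size l = morder C -> exists d, is_bij A d C.
Proof.
move=> [ul lA] szl; exists (fun t => nth 0%R (mseq C) (index t l)), l; split=> // N.
rewrite -count_mseq -[X in _ = count_mem _ X](map_nth_index 0%R ul) ?size_mseq //.
by rewrite count_map.
Qed.

Definition enum_of : seq {fset V} := epsilon (inhabits [::]) enumerates.

Lemma enum_ofP l : enumerates l -> enumerates enum_of.
Proof. by move=> El; apply: epsilon_spec; exists l. Qed.

(* Junk unless [A] is finite, [enum_of] being arbitrary otherwise. *)
Definition collect (d : {fset V} -> Note) : mset :=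
  [ffun N => count (fun t => d t == N) enum_of].

Lemma collectP d l : enumerates l -> is_bij A d (collect d).
Proof. by move=> /enum_ofP [u eA]; exists enum_of; split=> // N; rewrite ffunE. Qed.

Lemma morder_collect d l : enumerates l -> morder (collect d) = size l.
Proof. by move=> El; rewrite morder_count (size_enumerates (enum_ofP El) El). Qed.

Lemma eq_collect d d' l : enumerates l ->
  (forall t, A t -> d t = d' t) -> collect d = collect d'.
Proof.
move=> /enum_ofP [_ eA] dd'; apply/ffunP => N; rewrite !ffunE.
by apply: eq_in_count => t /eA At /=; rewrite dd'.
Qed.

Definition pick_bij (C : mset) : {fset V} -> Note :=
  epsilon (inhabits (fun _ => 0%R)) (fun d => is_bij A d C).

Lemma pick_bijP C l : enumerates l -> size l = morder C -> is_bij A (pick_bij C) C.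
Proof.
by move=> El szl; apply: (epsilon_spec _ (fun d => is_bij A d C)); exact: is_bij_exists El szl.
Qed.

End Bijections.

Lemma fset2_of_card (T : choiceType) (A : {fset T}) x :
  x \in A -> #|` A| = 2 -> exists2 y, x != y & A = [fset x; y].
Proof.
move=> xA cA; have /cardfs1P [y Axy] : #|` A `\ x| == 1.
  by move: (cardfsD1 x A); rewrite xA cA /=; lia.
exists y; last by rewrite -(fsetD1K xA) Axy.
have : y \in A `\ x by rewrite Axy fset11.
by rewrite in_fsetD1 eq_sym => /andP[].
Qed.

Lemma fset3_of_card (T : choiceType) (A : {fset T}) x y :
  x \in A -> y \in A -> x != y -> #|` A| = 3 -> exists z, A = [fset x; y; z].
Proof.
move=> xA yA xy cA.
have yAx : y \in A `\ x by rewrite in_fsetD1 eq_sym xy.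
have cAx : #|` A `\ x| = 2 by move: (cardfsD1 x A); rewrite xA cA /=; lia.
have [z _ Axyz] := fset2_of_card yAx cAx.
by exists z; rewrite -(fsetD1K xA) Axyz fsetUA.
Qed.

Section Tonnetz.
Variables (V : choiceType) (K : {fset V} -> Prop).
Hypothesis HK : triangulated_surface K.

Lemma facets_enum s : K s -> 1 < #|` s| ->
  exists2 l, enumerates (prec K ^~ s) l & size l = #|` s|.
Proof.
move=> Ks s_gt1.
have card_facet a : a \in s -> #|` s `\ a|.+1 = #|` s|.
  by move=> as_; rewrite (cardfsD1 a s) as_.
exists [seq s `\ a | a <- enum_fset s]; last by rewrite size_map.
split=> [|t].
  rewrite map_inj_in_uniq // => a b as_ _ eq_ab; apply/eqP/negPn/negP => ab.
  have : a \in s `\ b by rewrite in_fsetD1 ab as_.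
  by rewrite -eq_ab in_fsetD1 eqxx.
split=> [/mapP [a as_ ->] | [Kt [_ [ts ct]]]].
  have card_sDa := card_facet a as_.
  do !split=> //; last exact: fsubD1set.
  by apply: (ts_closed HK Ks (fsubD1set _ _)); rewrite -cardfs_gt0; lia.
have /cardfs1P [a sDt] : #|` s `\` t| == 1 by rewrite cardfsDS // -ct subSnn.
have : a \in s `\` t by rewrite sDt fset11.
rewrite in_fsetD => /andP[aNt as_]; apply/mapP; exists a => //.
apply/eqP; rewrite eqEfcard -ltnS card_facet // -ct leqnn andbT.
apply/fsubsetP => x xt; rewrite in_fsetD1 (fsubsetP ts _ xt) andbT.
by apply: contraNneq aNt => <-.
Qed.

Lemma edge_cofaces_enum e : K e -> #|` e| = 2 ->
  exists2 l, enumerates (prec K e) l & size l = 2.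
Proof.
move=> Ke ce.
have [f1 [f2 [f12 [[Kf1 cf1] ef1] [[Kf2 cf2] ef2] only_f12]]] :=
  ts_edge_two_faces HK (conj Ke ce).
exists [:: f1; f2] => //; split=> [|t]; first by rewrite /= inE f12.
rewrite !inE; split.
  by case/orP => /eqP ->; do !split=> //; rewrite ce ?cf1 ?cf2.
case=> _ [Kt [et ct]]; rewrite ce in ct.
by case: (only_f12 t (conj Kt (esym ct)) et) => ->; rewrite eqxx ?orbT.
Qed.

Lemma vertex_cofaces_enum v : K [fset v] -> exists l, enumerates (prec K [fset v]) l.
Proof.
move=> Kv; have [w [_ _ link]] := ts_link_cycle HK (conj Kv (cardfs1 v)).
exists (undup [seq [fset v; a] | a <- w & a != v]); apply: enumerates_undup => t.
split=> [/mapP [a] | [_ [Kt [vt ct]]]].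
  rewrite mem_filter => /andP[av aw] ->.
  have [Kf _] := (link a (next w a)).2 (conj aw (or_introl erefl)).
  do !split=> //; last by rewrite cardfs1 cardfs2 eq_sym av.
  + apply: (ts_closed HK Kf); last by rewrite -cardfs_gt0 cardfs2.
    by apply/fsubsetP => x; rewrite !in_fsetE => /orP[] ->; rewrite ?orbT.
  + by rewrite fsub1set fset21.
rewrite fsub1set in vt; rewrite cardfs1 in ct.
have [f [[Kf cf] tf]] := ts_pure HK Kt.
have [a va tE] := fset2_of_card vt (esym ct); rewrite tE in tf *.
have [b fE] :=
  fset3_of_card (fsubsetP tf _ (fset21 v a)) (fsubsetP tf _ (fset22 v a)) va cf.
have /(link a b) [aw _] : is_face K [fset v; a; b] by rewrite -fE.
by apply/mapP; exists a; rewrite // mem_filter eq_sym va.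
Qed.

Lemma cofaces_enum r : K r -> #|` r| <= 2 -> exists l, enumerates (prec K r) l.
Proof.
move=> Kr r_le2; have /andP[r_gt0 _] := ts_dim HK Kr.
have [/cardfs1P [v rE] | r2] : #|` r| == 1 \/ #|` r| = 2 by lia.
  by rewrite rE in Kr *; exact: vertex_cofaces_enum.
by have [l El _] := edge_cofaces_enum Kr r2; exists l.
Qed.

Definition facet_lab (T : {fset V} -> mset) (s : {fset V}) : {fset V} -> Note :=
  pick_bij (prec K ^~ s) (T s).

Definition lower (T : {fset V} -> mset) (r : {fset V}) : mset :=
  collect (prec K r) (facet_lab T ^~ r).

Lemma tonnetz_of_lower T :
  (forall s, K s -> 1 < #|` s| -> morder (T s) = #|` s|) ->
  (forall r, K r -> #|` r| <= 2 -> T r = lower T r) ->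
  is_tonnetz K T.
Proof.
move=> morderT T_lower.
have facet_labP s : K s -> 1 < #|` s| -> is_bij (prec K ^~ s) (facet_lab T s) (T s).
  move=> Ks s_gt1; have [l El szl] := facets_enum Ks s_gt1.
  by apply: pick_bijP El _; rewrite szl morderT.
have lowerP r : K r -> #|` r| <= 2 -> is_bij (prec K r) (facet_lab T ^~ r) (T r).
  move=> Kr r_le2; have [l El] := cofaces_enum Kr r_le2.
  by rewrite T_lower //; apply: collectP El.
split=> [s Ks s_gt1 | r Kr r_le2].
  exists (facet_lab T s); split=> [|t ts]; first exact: facet_labP.
  have [Kt [_ [_ ct]]] := ts; have /andP[_ s_le3] := ts_dim HK Ks.
  by apply: (is_bij_mem (lowerP t Kt _)) ts; lia.
exists (facet_lab T ^~ r); split=> [|t rt]; first exact: lowerP.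
have [_ [Kt [_ ct]]] := rt; have /andP[r_gt0 _] := ts_dim HK Kr.
by apply: (is_bij_mem (facet_labP t Kt _)) rt; lia.
Qed.

Definition extend (T2 : {fset V} -> mset) (s : {fset V}) : mset :=
  if #|` s| == 3 then T2 s
  else if #|` s| == 2 then lower T2 s else lower (lower T2) s.

Lemma extend_lower T2 r : K r -> #|` r| <= 2 -> extend T2 r = lower (extend T2) r.
Proof.
move=> Kr r_le2; have [l El] := cofaces_enum Kr r_le2.
have /andP[r_gt0 _] := ts_dim HK Kr.
have coface_card t : prec K r t -> #|` t| = #|` r|.+1 by case=> [_ [_ [_ ->]]].
rewrite [LHS]/extend [RHS]/lower.
have [] : #|` r| = 2 \/ #|` r| = 1 by lia.
all: move=> rE; rewrite rE /= /lower; apply: (eq_collect El) => t /coface_card.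
all: by rewrite rE /facet_lab /extend /= => ->.
Qed.

Lemma morder_extend T2 s : (forall f, is_face K f -> morder (T2 f) = 3) ->
  K s -> 1 < #|` s| -> morder (extend T2 s) = #|` s|.
Proof.
move=> morderT2 Ks s_gt1; have /andP[_ s_le3] := ts_dim HK Ks.
rewrite /extend; have [s3|s2] : #|` s| = 3 \/ #|` s| = 2 by lia.
  by rewrite s3 morderT2.
have [l El szl] := edge_cofaces_enum Ks s2.
by rewrite s2 /lower (morder_collect _ El) szl.
Qed.

End Tonnetz.

Theorem mainTheorem1 (V : choiceType) (K : {fset V} -> Prop)
    (HK : triangulated_surface K) (T2 : {fset V} -> mset)
    (H3 : forall s, is_face K s -> morder (T2 s) = 3) :
  exists T : {fset V} -> mset,
    is_tonnetz K T /\ (forall s, is_face K s -> T s = T2 s).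
Proof.
exists (extend K T2); split; last by move=> s [_ s3]; rewrite /extend s3.
apply: (tonnetz_of_lower HK) => [s | r]; first exact: morder_extend.
exact: extend_lower.
Qed.
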